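(* There is a constant $c_1>0$ such that for all sufficiently large $n$, $$h_3(n,4,1) > c_1\left(\frac{\log n}{\log\log n}\right)^{1/2}.$$ Equivalently, every $n$-vertex $3$-graph in which no four vertices span exactly one edge has a clique or coclique of size greater than $c_1(\log n/\log\log n)^{1/2}$.
   Context: For an $r$-uniform hypergraph ($r$-graph) $H$, a homogeneous set is a set of vertices that is either a clique (every $r$-subset is an edge) or a coclique (no $r$-subset is an edge); $h(H)$ denotes the size of a largest homogeneous set. An $(m,f)$-graph is an $r$-graph with $m$ vertices and $f$ edges; $H$ is $(m,f)$-free if it contains no induced sub-hypergraph that is an $(m,f)$-graph. For a set $Q$ of pairs $(m,f)$, $H$ is $Q$-free if it is $(m,f)$-free for every $(m,f)\in Q$. $h_r(n,Q)$ is the minimum of $h(H)$ over all $n$-vertex $Q$-free $r$-graphs $H$, and $h_r(n,m,f)=h_r(n,\{(m,f)\})$. *)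

From mathcomp Require Import all_boot.
From Stdlib Require Import Reals.
Set Implicit Arguments. Unset Strict Implicit. Unset Printing Implicit Defensive.

Definition uniform_hypergraph (r n : nat) (E : {set {set 'I_n}}) : Prop :=
  forall e, e \in E -> #|e| = r.

Definition is_clique (r n : nat) (E : {set {set 'I_n}}) (A : {set 'I_n}) : Prop :=
  forall e : {set 'I_n}, e \subset A -> #|e| = r -> e \in E.

Definition is_coclique (r n : nat) (E : {set {set 'I_n}}) (A : {set 'I_n}) : Prop :=
  forall e : {set 'I_n}, e \subset A -> #|e| = r -> e \notin E.

Definition is_homogeneous (r n : nat) (E : {set {set 'I_n}}) (A : {set 'I_n}) : Prop :=
  is_clique r E A \/ is_coclique r E A.

Definition induced_edges (n : nat) (E : {set {set 'I_n}}) (S : {set 'I_n}) : nat :=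
  #|[set e in E | e \subset S]|.

Definition mf_free (n m f : nat) (E : {set {set 'I_n}}) : Prop :=
  forall S : {set 'I_n}, #|S| = m -> induced_edges E S <> f.

(* Suppose every homogeneous set has at most m vertices. To each vertex x we
   attach, by a deterministic greedy procedure, an "end-homogeneous" sequence
   v_0, ..., v_(j-1), v_j = x: the edge status of v_i v_a v_b (i < a < b <= j)
   depends only on (i, a), giving a 2-colouring of the pairs of [0, j).
   (4,1)-freeness makes this colouring "inherit": if the pair (i, a) is false
   then i sees every later b as a does. For such colourings the chain of
   first false successors yields an Erdos-Szekeres argument (j <= m^2, since
   monochromatic sets of the colouring give homogeneous sets of the graph),
   and the colouring is determined by its "first false successor" table. As the greedy procedure is
   deterministic, x is determined by j and this table, whence
   n <= (m^2 + 1)^(m^2 + 1); for m <= (1/4) sqrt (ln n / ln ln n) this fails. *)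

From mathcomp Require Import all_boot.
From Stdlib Require Import Reals Lra Lia Classical.
From mathcomp Require Import zify.
Set Implicit Arguments. Unset Strict Implicit. Unset Printing Implicit Defensive.

Section InheritingColourings.
Variable j : nat.

(* A 2-colouring [col i a] of the pairs [i < a] of [0, j) inherits along false
   pairs: whenever [col i a] is false, [i] sees every later [b] exactly as [a]
   does. The colourings read off a (4,1)-free 3-graph have this property. *)
Definition inherits (col : nat -> nat -> bool) :=
  forall i a b, i < a -> a < b -> b < j -> col i a = false -> col i b = col a b.

Definition monochromatic (col : nat -> nat -> bool) (c : bool) (I : {set 'I_j}) :=
  forall p q : 'I_j, p \in I -> q \in I -> p < q -> col p q = c.

(* The first [a > i] with [col i a] false, or [j] if there is none. *)
Definition first_false (col : nat -> nat -> bool) i :=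
  i.+1 + find (fun a => ~~ col i a) (iota i.+1 (j - i.+1)).

Lemma first_falseP col i : i < j ->
  [/\ i < first_false col i <= j,
      first_false col i < j -> col i (first_false col i) = false
    & forall c, i < c < first_false col i -> col i c = true].
Proof.
move=> lt_ij; rewrite /first_false.
set s := iota _ _; set f := find _ s.
have f_le : f <= size s := find_size _ _.
have size_s : size s = j - i.+1 by rewrite size_iota.
split; first by apply/andP; split; lia.
- move=> lt_fj; have has_s : has (fun a => ~~ col i a) s by rewrite has_find; lia.
  have := nth_find 0 has_s; rewrite -/f /s nth_iota; last by lia.
  by move/negbTE.
- move=> c /andP [lt_ic lt_cf].
  have := before_find 0 (a := fun a => ~~ col i a) (s := s) (i := c - i.+1).
  rewrite -/f (_ : c - i.+1 < f); last by lia.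
  move/(_ isT); rewrite /s nth_iota; last by lia.
  by rewrite (_ : i.+1 + (c - i.+1) = c) //; [move/negbFE | lia].
Qed.

(* Among inheriting colourings, [col] is determined by [first_false]: each
   [col i a] is either forced true (before [first_false i]) or, by inheritance,
   equal to the colour of a pair of smaller span. *)
Lemma first_false_determines col col' : inherits col -> inherits col' ->
  (forall i, i < j -> first_false col i = first_false col' i) ->
  forall i a, i < a -> a < j -> col i a = col' i a.
Proof.
move=> col_inherits col'_inherits same_first i a; move: {2}(a - i) (leqnn (a - i)) => span.
elim: span i a => [|span IH] i a le_span lt_ia lt_aj; first by lia.
have lt_ij : i < j by lia.
have [bounds false_at true_before] := first_falseP col lt_ij.
have [bounds' false_at' true_before'] := first_falseP col' lt_ij.
rewrite -same_first // in bounds' false_at' true_before'.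
set b := first_false col i in bounds false_at true_before bounds' false_at' true_before'.
case: (ltngtP a b) => [lt_ab|lt_ba|eq_ab].
- by rewrite true_before ?true_before' // lt_ia.
- have lt_bj : b < j by lia.
  have lt_ib : i < b by lia.
  rewrite (col_inherits _ _ _ lt_ib lt_ba lt_aj (false_at lt_bj)).
  rewrite (col'_inherits _ _ _ lt_ib lt_ba lt_aj (false_at' lt_bj)).
  by apply: IH => //; lia.
- by rewrite eq_ab false_at ?false_at' //; lia.
Qed.

Variable col : nat -> nat -> bool.
Hypothesis col_inherits : inherits col.

(* [depth i] is the length of the chain [i, first_false col i, ...] in [0, j);
   it is defined with fuel [j - i], which always suffices. *)
Fixpoint depth_fuel (fuel i : nat) : nat :=
  if fuel is fuel'.+1 then
    (if first_false col i < j then depth_fuel fuel' (first_false col i) else 0).+1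
  else 0.

Definition depth i := depth_fuel (j - i) i.

Lemma depth_fuel_enough fuel fuel' i : i < j -> j - i <= fuel -> j - i <= fuel' ->
  depth_fuel fuel i = depth_fuel fuel' i.
Proof.
elim: fuel fuel' i => [|fuel IH] [|fuel'] i lt_ij le_f le_f' //=; try lia.
have [bounds _ _] := first_falseP col lt_ij.
by case: ifP => // lt_fj; congr S; apply: IH => //; lia.
Qed.

Lemma depth_unfold i : i < j ->
  depth i = (if first_false col i < j then depth (first_false col i) else 0).+1.
Proof.
move=> lt_ij; rewrite /depth (_ : j - i = (j - i).-1.+1) /=; last by lia.
case: ifP => // lt_fj; congr S; apply: depth_fuel_enough => //.
by have [bounds _ _] := first_falseP col lt_ij; lia.
Qed.

Lemma depth_decreasing i a : i < a -> a < j -> col i a = false ->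
  depth a < depth i.
Proof.
move: {2}(a - i) (leqnn (a - i)) => span.
elim: span i a => [|span IH] i a le_span lt_ia lt_aj col_ia; first by lia.
have lt_ij : i < j by lia.
have [bounds false_at true_before] := first_falseP col lt_ij.
set b := first_false col i in bounds false_at true_before.
have le_ba : b <= a.
  by rewrite leqNgt; apply/negP => lt_ab; rewrite true_before ?lt_ia in col_ia.
have lt_bj : b < j by lia.
rewrite (depth_unfold lt_ij) -/b lt_bj ltnS.
case: (ltngtP b a) le_ba => // [lt_ba _|-> //].
have lt_ib : i < b by lia.
apply/ltnW/(IH b a) => //; first by lia.
by rewrite -(col_inherits lt_ib lt_ba lt_aj (false_at lt_bj)).
Qed.

Lemma false_chain i : i < j ->
  exists I : {set 'I_j}, [/\ #|I| = depth i,
    forall c : 'I_j, c \in I -> i <= c,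
    forall c : 'I_j, c \in I -> i < c -> col i c = false
  & monochromatic col false I].
Proof.
move: {2}(j - i) (leqnn (j - i)) => span.
elim: span i => [|span IH] i le_span lt_ij; first by lia.
have [bounds false_at true_before] := first_falseP col lt_ij.
set b := first_false col i in bounds false_at true_before.
rewrite (depth_unfold lt_ij) -/b.
case: ifP => lt_bj; last first.
  exists [set Ordinal lt_ij]; split; first by rewrite cards1.
  - by move=> c; rewrite inE => /eqP ->.
  - by move=> c; rewrite inE => /eqP -> /=; rewrite ltnn.
  - by move=> p q; rewrite !inE => /eqP -> /eqP ->; rewrite ltnn.
have [I [card_I after_b false_b mono_I]] := IH b ltac:(lia) lt_bj.
have lt_ib : i < b by lia.
have false_i : forall c : 'I_j, c \in I -> col i c = false.
  move=> c cI; case: (ltngtP b c) (after_b c cI) => // [lt_bc _|<- _].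
    by rewrite (col_inherits lt_ib lt_bc (ltn_ord c) (false_at lt_bj)) false_b.
  exact: false_at.
have i_notin : Ordinal lt_ij \notin I.
  by apply/negP => /after_b /=; lia.
exists (Ordinal lt_ij |: I); split.
- by rewrite cardsU1 i_notin card_I.
- by move=> c; rewrite in_setU1 => /orP [/eqP -> //|/after_b]; lia.
- by move=> c; rewrite in_setU1 => /orP [/eqP -> /=|/false_i //]; rewrite ltnn.
- move=> p q; rewrite !in_setU1 => /orP [/eqP ->|pI] /orP [/eqP ->|qI] /=.
  + by rewrite ltnn.
  + by move=> _; apply: false_i.
  + by have := after_b p pI; lia.
  + exact: mono_I.
Qed.

Lemma depth_level_true t : monochromatic col true [set i : 'I_j | depth i == t].
Proof.
move=> p q; rewrite !inE => /eqP dp /eqP dq lt_pq.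
case col_pq: (col p q) => //.
by have := depth_decreasing lt_pq (ltn_ord q) col_pq; lia.
Qed.

(* Erdos-Szekeres type bound: if all monochromatic sets have fewer than [m]
   elements, then depths take fewer than [m] values and each level set has
   fewer than [m] elements, so [j <= m * m]. *)
Lemma length_bound m : (forall c I, monochromatic col c I -> #|I| < m) -> j <= m * m.
Proof.
move=> small_mono.
have depth_lt : forall i : 'I_j, depth i < m.
  move=> i; have [I [<- _ _ mono_I]] := false_chain (ltn_ord i).
  exact: small_mono mono_I.
rewrite -{1}(card_ord j) -sum1_card.
rewrite (partition_big (fun i : 'I_j => Ordinal (depth_lt i)) xpredT) //=.
rewrite -[m in m * _]card_ord -sum_nat_const; apply: leq_sum => t _.
rewrite sum1_card; apply/ltnW/(@leq_ltn_trans #|[set i : 'I_j | depth i == t]|).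
  by apply/subset_leq_card/subsetP => i; rewrite !inE.
exact: small_mono _ _ (@depth_level_true t).
Qed.
End InheritingColourings.

(* A property of triples that is invariant under all permutations needs only be
   checked on "sorted" triples; the order need not even be transitive, since
   every tournament on three points has a directed path through all three. *)
Lemma wlog_sorted3 (T : eqType) (lt : rel T) (P : T -> T -> T -> Prop) :
  (forall p q, p != q -> lt p q \/ lt q p) ->
  (forall p q r, P p q r -> P q p r) -> (forall p q r, P p q r -> P p r q) ->
  (forall p q r, lt p q -> lt q r -> P p q r) ->
  forall p q r, p != q -> q != r -> p != r -> P p q r.
Proof.
move=> total swap12 swap23 sorted.
have rot p q r : P p q r -> P q r p by move/swap12/swap23.
move=> p q r pq qr pr.
case: (total _ _ pq) (total _ _ qr) (total _ _ pr) => [ltpq|ltqp] [ltqr|ltrq] [ltpr|ltrp].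
- exact: sorted.
- exact: sorted.
- exact/swap23/sorted.
- exact/rot/sorted.
- exact/swap12/sorted.
- exact/rot/rot/sorted.
- exact/rot/swap23/sorted.
- exact/rot/swap23/sorted.
Qed.

Section SmallSets.
Variable T : finType.
Implicit Types (a b c d : T) (e : {set T}).

Lemma card3 a b c : a != b -> b != c -> a != c -> #|[set a; b; c]| = 3.
Proof. by move=> ab bc ac; rewrite -setUA cardsU1 cards2 bc !inE negb_or ab ac. Qed.

Lemma card4 a b c d : a != b -> a != c -> a != d -> b != c -> b != d -> c != d ->
  #|[set a; b; c; d]| = 4.
Proof.
move=> ab ac ad bc bd cd.
by rewrite -!setUA cardsU1 cardsU1 cards2 cd !inE !negb_or ab ac ad bc bd.
Qed.

Lemma triple_eq e a b c : a != b -> b != c -> a != c -> #|e| = 3 ->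
  e \subset [set a; b; c] -> e = [set a; b; c].
Proof. by move=> ab bc ac card_e sub; apply/setP/subset_cardP; rewrite ?card3. Qed.

Lemma triple_of_four e a b c d :
  a != b -> a != c -> a != d -> b != c -> b != d -> c != d ->
  #|e| = 3 -> e \subset [set a; b; c; d] ->
  [\/ e = [set a; b; c], e = [set a; b; d], e = [set a; c; d] | e = [set b; c; d]].
Proof.
move=> ab ac ad bc bd cd card_e /subsetP sub.
have : ~~ ([set a; b; c; d] \subset e).
  by apply/negP => /subset_leq_card; rewrite card4 ?card_e.
case/subsetPn => w w_in w_out.
have in_rest y : y \in e -> ((y == a) || (y == b) || (y == c) || (y == d)) && (y != w).
  move=> ye; move: (sub y ye); rewrite !inE => ->.
  by apply/negP => /eqP eq_yw; rewrite -eq_yw ye in w_out.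
move: w_in; rewrite !inE => /orP [/orP [/orP [] |] |] /eqP eq_w; subst w; [
  apply: Or44 | apply: Or43 | apply: Or42 | apply: Or41];
apply: triple_eq => //; apply/subsetP => y /in_rest; rewrite !inE;
by case: (y == a); case: (y == b); case: (y == c); case: (y == d).
Qed.
End SmallSets.

Section TripleSystem.
Variables (n : nat) (E : {set {set 'I_n}}).

Definition e3 (a b c : 'I_n) := [set a; b; c] \in E.

Lemma e3C12 a b c : e3 a b c = e3 b a c.
Proof. by rewrite /e3 setUAC setUC -setUA. Qed.

Lemma e3C23 a b c : e3 a b c = e3 a c b.
Proof. by rewrite /e3 setUAC. Qed.

(* If all triples of indices in [J], taken in increasing order, are mapped by
   [u] to triples of the same edge status [c], then [u @: J] is a clique or a
   coclique: a 3-subset of [u @: J] comes from three distinct indices. *)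
Lemma homogeneous_image k (u : 'I_k -> 'I_n) (J : {set 'I_k}) (c : bool) :
  (forall p q r, p \in J -> q \in J -> r \in J -> p < q -> q < r ->
     e3 (u p) (u q) (u r) = c) ->
  is_homogeneous 3 E (u @: J).
Proof.
move=> sorted_c.
suff edge_c (e : {set 'I_n}) : e \subset u @: J -> #|e| = 3 -> (e \in E) = c.
  by case: c sorted_c edge_c => _ edge_c; [left|right] => e sub card_e; rewrite edge_c.
move=> /subsetP sub card_e.
have : 2 < #|e| by rewrite card_e.
case/card_gt2P => [y1 [y2 [y3 [[y1e y2e y3e] [ne12 ne23 ne31]]]]].
have -> : e = [set y1; y2; y3].
  apply/esym/setP/subset_cardP; first by rewrite card3 // eq_sym.
  by apply/subsetP => y; rewrite !inE => /orP [/orP []|] /eqP ->.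
case/imsetP: (sub _ y1e) => p1 J1 ?; case/imsetP: (sub _ y2e) => p2 J2 ?.
case/imsetP: (sub _ y3e) => p3 J3 ?; subst y1 y2 y3.
have index_neq p q : u p != u q -> p != q by apply: contra => /eqP ->.
rewrite -/(e3 (u p1) (u p2) (u p3)); move: J1 J2 J3.
apply: (@wlog_sorted3 _ (fun p q : 'I_k => p < q)
  (fun p q r => p \in J -> q \in J -> r \in J -> e3 (u p) (u q) (u r) = c)).
- by move=> p q; rewrite neq_ltn => /orP [] ?; [left|right].
- by move=> p q r P_pqr Jq Jp Jr; rewrite e3C12 P_pqr.
- by move=> p q r P_pqr Jp Jr Jq; rewrite e3C23 P_pqr.
- by move=> p q r lt_pq lt_qr Jp Jq Jr; apply: sorted_c.
- exact: index_neq.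
- exact: index_neq.
- by rewrite eq_sym index_neq.
Qed.

Hypothesis E_uniform : uniform_hypergraph 3 E.
Hypothesis E_free : mf_free 4 1 E.

(* The (4,1)-freeness in local form: on four vertices [a, b, c, d] with [abc]
   and [abd] non-edges, [acd] and [bcd] must both be edges or both non-edges,
   since otherwise [{a, b, c, d}] spans exactly one edge. *)
Lemma edge_transfer a b c d :
  a != b -> a != c -> a != d -> b != c -> b != d -> c != d ->
  e3 a b c = false -> e3 a b d = false -> e3 a c d = e3 b c d.
Proof.
move=> ab ac ad bc bd cd abc abd; apply/eqP/negPn/negP => differ.
pose T := if e3 a c d then [set a; c; d] else [set b; c; d].
have T_edge : T \in E by move: differ; rewrite /T /e3; case: ifP => // _; case: (_ \in E).
have only_T : [set e in E | e \subset [set a; b; c; d]] = [set T].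
  apply/setP => e; rewrite !inE; apply/andP/eqP => [[eE sub]|->]; last first.
    split=> //; apply/subsetP => y; rewrite /T; case: ifP => _; rewrite !inE;
    by case/orP => [/orP []|] ->; rewrite ?orbT.
  case: (triple_of_four ab ac ad bc bd cd (E_uniform eE) sub) => ee; subst e.
  - by rewrite -/(e3 a b c) abc in eE.
  - by rewrite -/(e3 a b d) abd in eE.
  - by move: differ eE; rewrite /T /e3; do 2!case: (_ \in E).
  - by move: differ eE; rewrite /T /e3; do 2!case: (_ \in E).
by apply: (E_free (card4 ab ac ad bc bd cd)); rewrite /induced_edges only_T cards1.
Qed.
End TripleSystem.

Lemma nth_rcons_cat (T : Type) (x0 v : T) (vs t : seq T) i : i <= size vs ->
  nth x0 (rcons vs v ++ t) i = if i < size vs then nth x0 vs i else v.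
Proof.
move=> le_i; rewrite nth_cat size_rcons ltnS le_i nth_rcons.
by case: ltngtP le_i => // -> _; rewrite eqxx.
Qed.

Section GreedySequence.
Variables (n : nat) (E : {set {set 'I_n}}).
Implicit Types (S : {set 'I_n}) (vs : seq 'I_n) (v x y : 'I_n).

(* The greedy construction of an end-homogeneous sequence ending at [x].
   The vertex [x] enters only through the stopping test and the edge status of
   the triples [u v x], which is what makes the construction invertible. *)
Definition survivors S vs v x :=
  [set z in S | (z != v) && all (fun u => e3 E u v z == e3 E u v x) vs].

Fixpoint grow (fuel : nat) S vs x : seq 'I_n :=
  if fuel is fuel'.+1 then
    if [pick z in S] is Some v then
      if v == x then vs else grow fuel' (survivors S vs v x) (rcons vs v) x
    else vs
  else vs.

Lemma grow_prefix fuel S vs x : exists t, grow fuel S vs x = vs ++ t.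
Proof.
elim: fuel S vs => [|fuel IH] S vs /=; first by exists [::]; rewrite cats0.
case: pickP => [v _|_]; last by exists [::]; rewrite cats0.
case: eqP => _; first by exists [::]; rewrite cats0.
have [t ->] := IH (survivors S vs v x) (rcons vs v).
by exists (v :: t); rewrite cat_rcons.
Qed.

Lemma survivors_smaller S vs v x : v \in S -> #|survivors S vs v x| < #|S|.
Proof.
move=> vS; apply: proper_card; rewrite properE.
apply/andP; split; first by apply/subsetP => z; rewrite inE => /andP [].
by apply/subsetPn; exists v; rewrite // inE eqxx andbF.
Qed.

Lemma survivors_agree S vs v x y :
  (forall u, u \in vs -> e3 E u v x = e3 E u v y) ->
  survivors S vs v x = survivors S vs v y.
Proof.
move=> same; apply/setP => z; rewrite !inE; congr (_ && (_ && _)).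
by apply: eq_in_all => u uvs /=; rewrite same.
Qed.

Lemma grow_injective fuel S vs x y : x \in S -> y \in S -> #|S| <= fuel ->
  size (grow fuel S vs x) = size (grow fuel S vs y) ->
  (forall i a, i < a -> a < size (grow fuel S vs x) ->
     e3 E (nth x (grow fuel S vs x) i) (nth x (grow fuel S vs x) a) x =
     e3 E (nth y (grow fuel S vs y) i) (nth y (grow fuel S vs y) a) y) -> x = y.
Proof.
elim: fuel S vs => [|fuel IH] S vs xS yS le_fuel.
  suff : 0 < #|S| by lia.
  by apply/card_gt0P; exists x.
rewrite /=; case: pickP => [v vS|none]; last by rewrite none in xS.
have [tx grow_x] := grow_prefix fuel (survivors S vs v x) (rcons vs v) x.
have [ty grow_y] := grow_prefix fuel (survivors S vs v y) (rcons vs v) y.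
case: (eqVneq v x) => [<-|vx]; case: (eqVneq v y) => [<-|vy] //;
  rewrite ?eqxx ?(negbTE vx) ?(negbTE vy) => same_size same_status;
  try by move: same_size; rewrite ?grow_x ?grow_y size_cat size_rcons; lia.
have same_survivors : survivors S vs v x = survivors S vs v y.
  apply: survivors_agree => u uvs; have iu : index u vs < size vs by rewrite index_mem.
  have := same_status _ (size vs) iu.
  rewrite grow_x grow_y size_cat size_rcons ltn_addr // !nth_rcons_cat ?(ltnW iu) //.
  by rewrite iu ltnn !nth_index //; apply.
rewrite same_survivors in same_size same_status.
apply: (IH _ _ _ _ _ same_size same_status).
- by rewrite -same_survivors !inE xS eq_sym vx; apply/allP.
- by rewrite !inE yS eq_sym vy; apply/allP.
- by have := survivors_smaller vs y vS; lia.
Qed.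

Definition end_homogeneous S vs x :=
  [/\ x \in S, uniq vs, forall u, u \in vs -> u \notin S,
      forall i a z, i < a -> a < size vs -> z \in S ->
        e3 E (nth x vs i) (nth x vs a) z = e3 E (nth x vs i) (nth x vs a) x
    & forall i a b, i < a -> a < b -> b < size vs ->
        e3 E (nth x vs i) (nth x vs a) (nth x vs b) = e3 E (nth x vs i) (nth x vs a) x].

Lemma survivors_end_homogeneous S vs v x : end_homogeneous S vs x ->
  v \in S -> v != x -> end_homogeneous (survivors S vs v x) (rcons vs v) x.
Proof.
move=> [xS uniq_vs chosen pairs triples] vS vx.
have v_new : v \notin vs by apply/negP => /chosen; rewrite vS.
have nth_old i : i < size vs -> nth x (rcons vs v) i = nth x vs i.
  by move=> lt_i; rewrite nth_rcons lt_i.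
have nth_new : nth x (rcons vs v) (size vs) = v by rewrite nth_rcons ltnn eqxx.
split.
- by rewrite !inE xS eq_sym vx; apply/allP.
- by rewrite rcons_uniq v_new uniq_vs.
- move=> u; rewrite mem_rcons inE => /orP [/eqP ->|/chosen uS].
    by rewrite !inE eqxx andbF.
  by rewrite !inE (negbTE uS).
- move=> i a z lt_ia; rewrite size_rcons ltnS leq_eqVlt => /orP [/eqP ea|lt_a].
    subst a; rewrite nth_new nth_old // !inE => /and3P [_ _ /allP agree].
    by apply/eqP/agree/mem_nth.
  by rewrite !nth_old ?(ltn_trans lt_ia) // !inE => /andP [zS _]; apply: pairs.
- move=> i a b lt_ia lt_ab; rewrite size_rcons ltnS leq_eqVlt => /orP [/eqP eb|lt_b].
    by subst b; rewrite nth_new !nth_old ?(ltn_trans lt_ia) //; apply: pairs.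
  by rewrite !nth_old ?(ltn_trans lt_ab) ?(ltn_trans lt_ia) ?(ltn_trans lt_ab) //;
    apply: triples.
Qed.

Lemma grow_end_homogeneous fuel S vs x : end_homogeneous S vs x ->
  exists S', end_homogeneous S' (grow fuel S vs x) x.
Proof.
elim: fuel S vs => [|fuel IH] S vs inv_S /=; first by exists S.
case: pickP => [v vS|_]; last by exists S.
case: eqVneq => [_|vx]; first by exists S.
exact/IH/survivors_end_homogeneous.
Qed.
End GreedySequence.

Section Coding.
Variables (n m : nat) (E : {set {set 'I_n}}).
Hypothesis E_uniform : uniform_hypergraph 3 E.
Hypothesis E_free : mf_free 4 1 E.
Hypothesis small_homogeneous : forall A, is_homogeneous 3 E A -> #|A| <= m.

(* The greedy sequence [v_0, ..., v_(len x - 1)] attached to the vertex [x];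
   we also write [v_(len x) = x]. *)
Definition seq_to x := grow E n setT [::] x.
Definition len x := size (seq_to x).
Definition vtx x i := nth x (seq_to x) i.

Definition colour x i a := e3 E (vtx x i) (vtx x a) x.

Lemma vtx_len x : vtx x (len x) = x.
Proof. exact: nth_default. Qed.

Lemma seq_to_end_homogeneous x : exists S, end_homogeneous E S (seq_to x) x.
Proof. by apply: grow_end_homogeneous; split; rewrite ?inE. Qed.

Lemma vtx_neq x p q : p < q -> q <= len x -> vtx x p != vtx x q.
Proof.
move=> lt_pq le_q; have [S [xS uniq_seq chosen _ _]] := seq_to_end_homogeneous x.
have uniq_all : uniq (rcons (seq_to x) x).
  by rewrite rcons_uniq uniq_seq andbT; apply/negP => /chosen; rewrite xS.
have vtxE i : i <= len x -> vtx x i = nth x (rcons (seq_to x) x) i.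
  by move=> le_i; rewrite /vtx nth_rcons; case: ltngtP le_i => // -> _; rewrite nth_default.
rewrite !vtxE ?(ltnW (leq_trans lt_pq le_q)) // nth_uniq ?size_rcons ?neq_ltn ?lt_pq //.
by rewrite -/(len x); lia.
Qed.

Lemma vtx_triple x i a b : i < a -> a < b -> b <= len x ->
  e3 E (vtx x i) (vtx x a) (vtx x b) = colour x i a.
Proof.
move=> lt_ia lt_ab; rewrite leq_eqVlt => /orP [/eqP ->|lt_b]; first by rewrite vtx_len.
by have [S [_ _ _ _ triples]] := seq_to_end_homogeneous x; apply: triples.
Qed.

Lemma colour_inherits x : inherits (len x) (colour x).
Proof.
move=> i a b lt_ia lt_ab lt_b col_ia.
have neq_x p : p < len x -> vtx x p != x.
  by move=> lt_p; have := vtx_neq lt_p (leqnn (len x)); rewrite vtx_len.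
apply: (edge_transfer E_uniform E_free); rewrite ?vtx_neq ?neq_x //; try lia.
by rewrite vtx_triple //; lia.
Qed.

(* A monochromatic set [I] of the colouring, together with [x], gives the
   homogeneous set [{v_i : i in I} + {x}]; hence [#|I| < m]. *)
Lemma monochromatic_small x c (I : {set 'I_(len x)}) :
  monochromatic (colour x) c I -> #|I| < m.
Proof.
move=> mono_I.
pose J : {set 'I_(len x).+1} := ord_max |: [set widen_ord (leqnSn _) i | i in I].
have in_I (p : 'I_(len x).+1) : p \in J -> p < len x ->
    exists2 i : 'I_(len x), i \in I & val i = val p.
  rewrite in_setU1 => /orP [/eqP -> /=|/imsetP [i iI ->]]; first by rewrite ltnn.
  by exists i.
have homog : is_homogeneous 3 E [set vtx x p | p : 'I_(len x).+1 in J].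
  apply: (@homogeneous_image _ E _ (fun p => vtx x p) J c) => p q r Jp Jq Jr lt_pq lt_qr.
  have lt_q : q < len x by have := ltn_ord r; lia.
  have [i iI ip] := in_I p Jp (ltn_trans lt_pq lt_q).
  have [a aI aq] := in_I q Jq lt_q.
  have lt_ia : i < a by rewrite ip aq.
  have le_r : r <= len x by rewrite -ltnS.
  by rewrite -ip -aq vtx_triple ?mono_I // aq.
have card_J : #|J| = #|I|.+1.
  have max_out : ord_max \notin [set widen_ord (leqnSn _) i | i in I].
    by apply/imsetP => -[i _ /(congr1 val) /=]; have := ltn_ord i; lia.
  rewrite cardsU1 max_out card_imset //.
  by move=> i i' /(congr1 val) /= /val_inj.
have inj : {in J &, injective (fun p : 'I_(len x).+1 => vtx x p)}.
  by move=> p q _ _ /eqP; apply: contraTeq; rewrite neq_ltn => /orP [] lt_pq;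
    [|rewrite eq_sym]; apply: vtx_neq lt_pq _; rewrite -ltnS ltn_ord.
by have := small_homogeneous homog; rewrite (card_in_imset inj) card_J.
Qed.

Lemma len_bound x : len x <= m * m.
Proof. by apply: length_bound; [exact: colour_inherits | exact: monochromatic_small]. Qed.

(* The code of [x]: the length [len x] and the table of [first_false] for its
   colouring, both bounded in terms of [m] by [len_bound]. *)
Definition code x : 'I_(m * m).+1 * {ffun 'I_(m * m) -> 'I_(m * m).+1} :=
  (inord (len x), [ffun i : 'I_(m * m) => inord (first_false (len x) (colour x) i)]).

(* The code determines the colouring ([first_false_determines]) and hence the
   vertex ([grow_injective]). *)
Lemma code_injective : injective code.
Proof.
move=> x y [same_len same_table].
have [le_x le_y] := (len_bound x, len_bound y).
have eq_len : len x = len y.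
  by move/(congr1 (@nat_of_ord _)): same_len; rewrite !inordK //; lia.
have same_first i : i < len x ->
    first_false (len x) (colour x) i = first_false (len x) (colour y) i.
  move=> lt_i; have lt_mm : i < m * m by lia.
  pose entry (f : {ffun 'I_(m * m) -> 'I_(m * m).+1}) := nat_of_ord (f (Ordinal lt_mm)).
  move/(congr1 entry): same_table; rewrite /entry !ffunE /= -eq_len.
  have [bounds_x _ _] := first_falseP (colour x) lt_i.
  have [bounds_y _ _] := first_falseP (colour y) lt_i.
  by rewrite !inordK //; lia.
have y_inherits : inherits (len x) (colour y) by rewrite eq_len; exact: colour_inherits.
have same_colour := first_false_determines (@colour_inherits x) y_inherits same_first.
apply: (@grow_injective _ E n setT [::] x y _ _ _ eq_len same_colour);
  by rewrite ?inE ?cardsT ?card_ord.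
Qed.

Lemma vertex_count_bound : n <= expn (m * m).+1 (m * m).+1.
Proof.
have := leq_card code code_injective.
by rewrite card_ord card_prod card_ffun !card_ord expnS.
Qed.
End Coding.

Lemma large_homogeneous n m (E : {set {set 'I_n}}) :
  uniform_hypergraph 3 E -> mf_free 4 1 E -> expn (m * m).+1 (m * m).+1 < n ->
  exists A, is_homogeneous 3 E A /\ m < #|A|.
Proof.
move=> E_uniform E_free many; apply: NNPP => none.
have small A : is_homogeneous 3 E A -> #|A| <= m.
  by move=> homog; rewrite leqNgt; apply/negP => big; apply: none; exists A.
by have := vertex_count_bound E_uniform E_free small; rewrite leqNgt many.
Qed.

Open Scope R_scope.

Lemma ln_le_compat a b : 0 < a -> a <= b -> ln a <= ln b.
Proof.
move=> a_pos; case/Rle_lt_or_eq_dec => [lt_ab|->]; last exact: Rle_refl.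
exact/Rlt_le/ln_increasing.
Qed.

(* [ln L <= 2 sqrt L], from [1 + t <= exp t] at [t = ln (sqrt L)]. *)
Lemma ln_le_2sqrt L : 0 < L -> ln L <= 2 * sqrt L.
Proof.
move=> L_pos; have sqrt_pos : 0 < sqrt L by apply: sqrt_lt_R0.
have ln_sqrt : ln L = 2 * ln (sqrt L).
  by rewrite -{1}(sqrt_sqrt L) ?ln_mult //; lra.
by have := exp_ineq1_le (ln (sqrt L)); rewrite exp_ln //; lra.
Qed.

(* MathComp's [expn] and the Stdlib's [Nat.pow], which [pow_INR] speaks about. *)
Lemma expn_natpow a b : expn a b = Nat.pow a b.
Proof. by elim: b => // b IH; rewrite expnS IH. Qed.

Lemma INR_expn a b : INR (expn a b) = INR a ^ b.
Proof. by rewrite expn_natpow pow_INR. Qed.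

Lemma ln_ge_8 n : (expn 3 8 <= n)%nat -> 8 <= ln (INR n).
Proof.
move=> le_n; have ln3 : 1 <= ln 3.
  rewrite -(ln_exp 1); apply: ln_le_compat; [exact: exp_pos | exact: exp_le_3].
have : ln (3 ^ 8) <= ln (INR n).
  apply: ln_le_compat; first by apply: pow_lt; lra.
  by rewrite -(INR_IZR_INZ 3) -INR_expn; apply: le_INR; apply/leP.
rewrite ln_pow; last by lra.
by rewrite [INR 8]/=; lra.
Qed.

(* For [L >= 8] and [1 <= k <= L / (16 ln L) + 1] we have [k ln k < L]:
   indeed [k ln k <= (L / (16 ln L) + 1) ln L = L / 16 + ln L] and
   [ln L <= 2 sqrt L < 15 L / 16]. *)
Lemma self_power_below L k : 8 <= L -> 1 <= k -> k <= L / (16 * ln L) + 1 ->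
  k * ln k < L.
Proof.
move=> L_ge k_ge k_le; set l := ln L.
have l_ge : 1 <= l.
  rewrite /l -(ln_exp 1); apply: ln_le_compat; first exact: exp_pos.
  by have := exp_le_3; lra.
have ratio_le : L / (16 * l) <= L / 16.
  rewrite /Rdiv; apply: Rmult_le_compat_l; first by lra.
  by apply: Rinv_le_contravar; lra.
have k_le_L : k <= L by move: k_le ratio_le; set r := L / (16 * l); lra.
have ln_k_le : ln k <= l by apply: ln_le_compat; lra.
have ln_k_ge : 0 <= ln k by rewrite -ln_1; apply: ln_le_compat; lra.
have main : k * ln k <= L / 16 + l.
  have -> : L / 16 + l = (L / (16 * l) + 1) * l by field; lra.
  by apply: Rmult_le_compat => //; lra.
have s_pos : 0 < sqrt L by apply: sqrt_lt_R0; lra.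
have s_sq := sqrt_sqrt L ltac:(lra).
have s_ge : 32 / 15 < sqrt L by nra.
have := @ln_le_2sqrt L ltac:(lra); rewrite -/l; nra.
Qed.

Lemma code_space_small n m : (expn 3 8 <= n)%nat ->
  INR m <= / 4 * sqrt (ln (INR n) / ln (ln (INR n))) ->
  (expn (m * m).+1 (m * m).+1 < n)%nat.
Proof.
move=> le_n m_le; set L := ln (INR n) in m_le; set l := ln L in m_le.
have L_ge : 8 <= L by apply: ln_ge_8.
have l_pos : 0 < l.
  by rewrite /l -ln_1; apply: ln_increasing; lra.
have ratio_nonneg : 0 <= L / l by apply/Rlt_le/Rdiv_lt_0_compat; lra.
have sq_le : INR (m * m) <= L / (16 * l).
  have m_nonneg := pos_INR m; have s_sq := sqrt_sqrt _ ratio_nonneg.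
  set s := sqrt (L / l) in m_le s_sq *.
  have -> : L / (16 * l) = (/ 4 * s) * (/ 4 * s).
    rewrite (_ : / 4 * s * (/ 4 * s) = / 16 * (s * s)); last by field.
    by rewrite s_sq; field; lra.
  by rewrite mult_INR; apply: Rmult_le_compat.
set k := INR (m * m).+1.
have k_eq : k = INR (m * m) + 1 by rewrite /k S_INR.
have k_ge : 1 <= k by have := pos_INR (m * m); lra.
have k_le : k <= L / (16 * l) + 1 by rewrite k_eq; apply: Rplus_le_compat_r.
have below := self_power_below L_ge k_ge k_le.
have n_pos : 0 < INR n by apply: lt_0_INR; apply/ltP; apply: leq_trans le_n.
apply/ltP/INR_lt/ln_lt_inv => //; rewrite INR_expn -/k; first by apply: pow_lt; lra.
by rewrite ln_pow -/k -/L; lra.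
Qed.

Lemma nat_floor x : 0 <= x -> exists m : nat, INR m <= x < INR m + 1.
Proof.
move=> x_nonneg; have [up_gt up_le] := archimed x.
have up_pos : (0 <= up x - 1)%Z by have := lt_IZR 0 (up x) ltac:(lra); lia.
have [m m_eq] := IZN _ up_pos; exists m.
by rewrite INR_IZR_INZ -m_eq minus_IZR; lra.
Qed.

Theorem mainTheorem2 :
  exists c1 : R, 0 < c1 /\
  exists N : nat, forall n : nat, (N <= n)%nat ->
  forall E : {set {set 'I_n}},
    uniform_hypergraph 3 E -> mf_free 4 1 E ->
    exists A : {set 'I_n}, is_homogeneous 3 E A /\
      INR #|A| > c1 * sqrt (ln (INR n) / ln (ln (INR n))).
Proof.
exists (/ 4); split; first by lra.
exists (expn 3 8) => n le_n E E_uniform E_free.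
set bound := / 4 * _.
have [m [m_le m_gt]] : exists m : nat, INR m <= bound < INR m + 1.
  by apply: nat_floor; rewrite /bound; have := sqrt_pos (ln (INR n) / ln (ln (INR n))); lra.
have [A [homog large]] := large_homogeneous E_uniform E_free (code_space_small le_n m_le).
exists A; split => //.
by have := le_INR _ _ (leP large); rewrite S_INR; lra.
Qed.
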